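(* Let $B$ be an $n\times n$ matrix of non-negative integers whose last $n-m$ rows are zero. Suppose that $J_{nm}+B$ is irreducible and that its top-left $m\times m$ corner is irreducible. Suppose $B'$ is formed from $B$ in one of two ways: - by adding some column of $B$ to a different column; or - by adding some non-zero row of $B$ to a different non-zero row. Then $J_{nm}+B\sim_M J_{nm}+B'$.
   Context: $J_{nm}$ ($0\le m\le n$) is the $n\times n$ matrix whose $i$-th row, for $i\le m$, has a $1$ in position $i$ and $0$ elsewhere, and whose last $n-m$ rows consist entirely of $\infty$. Arithmetic convention: $\infty+a=\infty$. For an $X\times X$ matrix $A$ with entries in $\{0,1,2,\dots\}\cup\{\infty\}$, $G_A$ is the graph with vertex set $X$ and exactly $A(x,y)$ edges from $x$ to $y$. A matrix $A$ is irreducible if $G_A$ is strongly connected. For matrices, $A\sim_M B$ means $G_A\sim_M G_B$. A graph may have multiple edges and loops. A source receives no edges, a sink emits no edges, and an infinite emitter emits infinitely many edges. A vertex is singular if it is a sink or infinite emitter, and regular otherwise. Move-equivalence $\sim_M$ is the smallest equivalence relation on graphs with finitely many vertices such that $G\sim_M E$ whenever $E$ is isomorphic to a graph obtained from $G$ by one of the following moves. (S) Delete a regular source together with the edges it emits. (R) For a regular vertex $u$ emitting exactly one edge $f$, with $r(f)\neq u$, and all of whose incoming edges have the same source $v$: delete $u$, $f$ and the edges into $u$, and add for each $e\in r^{-1}(u)$ an edge $[ef]$ from $v$ to $r(f)$. (O) Out-splitting at a non-sink $v$ along a partition $\mathcal E_1,\dots,\mathcal E_n$ of $s^{-1}(v)$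 with at most one infinite part. Replace $v$ by $v^1,\dots,v^n$. Each edge $e$ into $v$ becomes copies $e^1,\dots,e^n$ with $r(e^i)=v^i$ and source $s(e)$, or source $v^j$ if $s(e)=v$ and $e\in\mathcal E_j$. An edge from $v$ to $w\neq v$ lying in $\mathcal E_i$ gets source $v^i$. (I) In-splitting at a regular non-source $v$ along a partition $\mathcal E_1,\dots,\mathcal E_n$ of $r^{-1}(v)$. Replace $v$ by $v^1,\dots,v^n$. Each edge $e$ out of $v$ becomes copies $e^1,\dots,e^n$ with $s(e^i)=v^i$ and range $r(e)$, or range $v^j$ if $r(e)=v$ and $e\in\mathcal E_j$. An edge into $v$ from $w\neq v$ lying in $\mathcal E_i$ gets range $v^i$. *)

From HB Require Import structures.
From mathcomp Require Import all_boot all_algebra.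
From Stdlib Require Import Relations.Relation_Operators.
From Stdlib Require List.

Set Implicit Arguments.
Unset Strict Implicit.
Unset Printing Implicit Defensive.

(* A directed graph with finitely many vertices; edges form an arbitrary type,
   so multiple edges, loops and infinitely many edges are allowed. *)
Record graph := Graph { gV : finType; gE : Type; gs : gE -> gV; gr : gE -> gV }.

Section GraphDefs.
Variable G : graph.

Definition emits_finitely (v : gV G) : Prop :=
  exists l : seq (gE G), forall e, gs e = v -> List.In e l.
Definition is_sink (v : gV G) : Prop := forall e : gE G, gs e <> v.
Definition is_source (v : gV G) : Prop := forall e : gE G, gr e <> v.
Definition infinite_emitter (v : gV G) : Prop := ~ emits_finitely v.
Definition singular (v : gV G) : Prop := is_sink v \/ infinite_emitter v.
Definition regular (v : gV G) : Prop := ~ singular v.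

Definition Vdel (u : gV G) := {w : gV G | w != u}.
Definition Edel (u : gV G) := {e : gE G | (gs e != u) && (gr e != u)}.

Lemma Edel_s (u : gV G) (e : Edel u) : gs (sval e) != u.
Proof. by case/andP: (svalP e). Qed.
Lemma Edel_r (u : gV G) (e : Edel u) : gr (sval e) != u.
Proof. by case/andP: (svalP e). Qed.

Definition del_s (u : gV G) (e : Edel u) : Vdel u := exist _ (gs (sval e)) (Edel_s e).
Definition del_r (u : gV G) (e : Edel u) : Vdel u := exist _ (gr (sval e)) (Edel_r e).

Definition graphS (u : gV G) : graph := @Graph (Vdel u : finType) (Edel u) (@del_s u) (@del_r u).

Definition moveS (H : graph) : Prop :=
  exists u : gV G, regular u /\ is_source u /\ H = graphS u.

Definition ER (u : gV G) := (Edel u + {e : gE G | gr e == u})%type.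
Definition graphR (u v : gV G) (f : gE G) (hv : v != u) (hf : gr f != u) : graph :=
  @Graph (Vdel u : finType) (ER u)
    (fun x => match x with inl e => del_s e | inr _ => exist _ v hv end)
    (fun x => match x with inl e => del_r e | inr _ => exist _ (gr f) hf end).

Definition moveR (H : graph) : Prop :=
  exists (u v : gV G) (f : gE G) (hv : v != u) (hf : gr f != u),
    regular u /\ gs f = u /\ (forall e, gs e = u -> e = f) /\
    (forall e, gr e = u -> gs e = v) /\ H = graphR hv hf.

(* splitting: vertex v replaced by copies indexed by 'I_k *)
Definition Vsplit (v : gV G) (k : nat) := (Vdel v + 'I_k)%type.
Definition lift_v (v : gV G) (k : nat) (w : gV G) (i : 'I_k) : Vsplit v k :=
  match (insub w : option (Vdel v)) with Some w' => inl w' | None => inr i end.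

Definition part_finite (P : gE G -> Prop) (k : nat) (p : gE G -> 'I_k) (i : 'I_k) : Prop :=
  exists l : seq (gE G), forall e, P e -> p e = i -> List.In e l.

Definition EO (v : gV G) (k : nat) :=
  ({e : gE G | gr e != v} + ({e : gE G | gr e == v} * 'I_k))%type.
Definition graphO (v : gV G) (k : nat) (p : gE G -> 'I_k) : graph :=
  @Graph (Vsplit v k : finType) (EO v k)
    (fun x => match x with
              | inl e => lift_v v (gs (sval e)) (p (sval e))
              | inr (e, _) => lift_v v (gs (sval e)) (p (sval e)) end)
    (fun x => match x with
              | inl e => inl (exist _ (gr (sval e)) (svalP e))
              | inr (_, i) => inr i end).

Definition moveO (H : graph) : Prop :=
  exists (v : gV G) (k : nat) (p : gE G -> 'I_k),
    ~ is_sink v /\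
    (forall i : 'I_k, exists e, gs e = v /\ p e = i) /\
    (forall i j : 'I_k, i != j ->
        part_finite (fun e => gs e = v) p i \/ part_finite (fun e => gs e = v) p j) /\
    H = graphO v p.

Definition EI (v : gV G) (k : nat) :=
  ({e : gE G | gs e != v} + ({e : gE G | gs e == v} * 'I_k))%type.
Definition graphI (v : gV G) (k : nat) (p : gE G -> 'I_k) : graph :=
  @Graph (Vsplit v k : finType) (EI v k)
    (fun x => match x with
              | inl e => inl (exist _ (gs (sval e)) (svalP e))
              | inr (_, i) => inr i end)
    (fun x => match x with
              | inl e => lift_v v (gr (sval e)) (p (sval e))
              | inr (e, _) => lift_v v (gr (sval e)) (p (sval e)) end).

Definition moveI (H : graph) : Prop :=
  exists (v : gV G) (k : nat) (p : gE G -> 'I_k),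
    regular v /\ ~ is_source v /\
    (forall i : 'I_k, exists e, gr e = v /\ p e = i) /\
    H = graphI v p.

Definition reach (x y : gV G) : Prop :=
  clos_refl_trans (gV G) (fun a b => exists e : gE G, gs e = a /\ gr e = b) x y.
Definition strongly_connected : Prop := forall x y : gV G, reach x y.

End GraphDefs.

Definition graph_iso (G H : graph) : Prop :=
  exists (fV : gV G -> gV H) (fE : gE G -> gE H),
    bijective fV /\ bijective fE /\
    (forall e, gs (fE e) = fV (gs e)) /\ (forall e, gr (fE e) = fV (gr e)).

Definition move (G H : graph) : Prop := moveS G H \/ moveR G H \/ moveO G H \/ moveI G H.

Definition move_step (G E : graph) : Prop := exists K, move G K /\ graph_iso K E.

Definition move_equiv (G E : graph) : Prop := clos_refl_sym_trans graph move_step G E.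

(* matrices over {0,1,2,...} ∪ {∞}; None stands for ∞ *)
Definition ninf := option nat.
Definition addinf (a b : ninf) : ninf :=
  match a, b with Some x, Some y => Some (x + y)%N | _, _ => None end.
Definition mxaddinf n (A B : 'M[ninf]_n) : 'M[ninf]_n := map2_mx addinf A B.
Definition mxinf n (B : 'M[nat]_n) : 'M[ninf]_n := map_mx Some B.

(* J_{nm}, 0-indexed: row i < m has a 1 at position i, rows i >= m are all ∞ *)
Definition J_nm (n m : nat) : 'M[ninf]_n :=
  \matrix_(i, j) (if (i < m)%N then Some (nat_of_bool (i == j)) else None).

Definition edge_ok n (A : 'M[ninf]_n) (t : 'I_n * 'I_n * nat) : bool :=
  match A t.1.1 t.1.2 with Some c => (t.2 < c)%N | None => true end.

(* the graph G_A: exactly A(x,y) edges from x to y *)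
Definition mgraph n (A : 'M[ninf]_n) : graph :=
  @Graph 'I_n {t : 'I_n * 'I_n * nat | edge_ok A t}
    (fun t => (sval t).1.1) (fun t => (sval t).1.2).

Definition irreducible n (A : 'M[ninf]_n) : Prop := strongly_connected (mgraph A).

Definition mx_move_equiv n k (A : 'M[ninf]_n) (B : 'M[ninf]_k) : Prop :=
  move_equiv (mgraph A) (mgraph B).

Definition topleft (T : Type) n m (hmn : (m <= n)%N) (A : 'M[T]_n) : 'M[T]_m :=
  \matrix_(i, j) A (widen_ord hmn i) (widen_ord hmn j).

From mathcomp Require Import all_boot all_algebra zify.
From Stdlib Require Import Relations.Relation_Operators Relations.Operators_Properties.
From Stdlib Require Import ClassicalEpsilon FunctionalExtensionality Lia.
From Stdlib Require List.

Set Implicit Arguments.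
Unset Strict Implicit.
Unset Printing Implicit Defensive.

(* Graphs are compared through their fibers: a graph is isomorphic to the graph of a matrix
   [A] as soon as there are exactly [A x y] edges from [x] to [y], so each move becomes a
   computation on matrices.  Column [u] is added to column [t] across an edge [u -> t] by
   out-splitting [u] so that one copy emits only that edge, and then removing this copy:
   in-splits detach its sources one at a time until an (R)-move applies.  Row [i] is added
   to row [i'] across an edge [i' -> i] by in-splitting [i] so that one copy receives only
   that edge, and collapsing this copy into [i']: out-splits followed by (R)-moves hand its
   out-edges over to [i'] one at a time.  In [J_nm + B] every vertex of the first [m] has
   its loop and the other rows are infinite, so these constructions apply to every edge.
   Finally, adding [x] into [k] and then [k] into [z] equals adding [x] into [z], [k] into
   [z] and [x] into [k], so the single-edge operations propagate along paths: a path from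
   [j] to [j'] in [J_nm + B] gives the column operation, and a path from [i'] to [i] in
   the top-left corner (both rows being non-zero, they lie in the corner) the row one. *)

Definition equipotent (A B : Type) : Prop := exists f : A -> B, bijective f.

Lemma inj_surj_bijective (A B : Type) (f : A -> B) :
  injective f -> (forall y, exists x, f x = y) -> bijective f.
Proof.
move=> f_inj f_surj.
pose g y := proj1_sig (constructive_indefinite_description _ (f_surj y)).
exists g => [x|y]; rewrite /g; case: constructive_indefinite_description => //= x' fx'.
exact: f_inj.
Qed.

Lemma equipotent_inj_surj (A B : Type) (f : A -> B) :
  injective f -> (forall y, exists x, f x = y) -> equipotent A B.
Proof. by move=> ? ?; exists f; apply: inj_surj_bijective. Qed.

Lemma equipotent_sym A B : equipotent A B -> equipotent B A.
Proof. by case=> f [g fK gK]; exists g; exists f. Qed.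

Lemma equipotent_trans A B C : equipotent A B -> equipotent B C -> equipotent A C.
Proof. by case=> f f_bij [g g_bij]; exists (g \o f); apply: bij_comp. Qed.

Lemma equipotent_sum A B A' B' :
  equipotent A A' -> equipotent B B' -> equipotent (A + B) (A' + B').
Proof.
case=> f [f' fK f'K] [g [g' gK g'K]].
exists (fun x => match x with inl a => inl (f a) | inr b => inr (g b) end).
exists (fun x => match x with inl a => inl (f' a) | inr b => inr (g' b) end).
  by case=> x; rewrite ?fK ?gK.
by case=> x; rewrite ?f'K ?g'K.
Qed.

Lemma equipotent_sub (A B : Type) (Q : B -> bool) (f : A -> B) :
  injective f -> (forall a, Q (f a)) -> (forall b, Q b -> exists a, f a = b) ->
  equipotent A {b | Q b}.
Proof.
move=> f_inj Qf f_onto.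
apply: (@equipotent_inj_surj _ _ (fun a => exist _ (f a) (Qf a))).
  by move=> x y [/f_inj].
move=> [b Qb]; case: (f_onto b Qb) => a fa; exists a; subst.
by congr exist; apply: bool_irrelevance.
Qed.

Lemma equipotent_sub_eq (T : Type) (P Q : T -> bool) :
  P =1 Q -> equipotent {x | P x} {x | Q x}.
Proof.
move=> PQ; apply: (@equipotent_sub _ _ _ (fun x : {x | P x} => sval x)).
- by move=> [x Px] [y Py] /= xy; subst; congr exist; apply: bool_irrelevance.
- by move=> [x Px] /=; rewrite -PQ.
- by move=> x Qx; exists (exist _ x (etrans (PQ x) Qx)).
Qed.

Definition ninf_type (c : ninf) : Type :=
  match c with Some k => 'I_k | None => nat end.
Definition has_card (T : Type) (c : ninf) := equipotent T (ninf_type c).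

Definition ninf_lt (k : nat) (c : ninf) : bool :=
  match c with Some c => k < c | None => true end.
Definition ninf_pred (c : ninf) : ninf :=
  match c with Some c => Some c.-1 | None => None end.

Lemma has_card_equipotent T T' c : equipotent T T' -> has_card T' c -> has_card T c.
Proof. exact: equipotent_trans. Qed.

Lemma equipotent_ninf_type_addinf a b :
  equipotent (ninf_type a + ninf_type b) (ninf_type (addinf a b)).
Proof.
case: a => [a|]; case: b => [b|] /=.
- by exists unsplit; exists split; [apply: unsplitK | apply: splitK].
- apply: (@equipotent_inj_surj _ _
    (fun x => match x with inl i => nat_of_ord i | inr k => a + k end)).
    case=> [i|k] [j|l] /= ij;
      [congr inl; exact: val_inj | have := ltn_ord i | have := ltn_ord j | congr inr]; lia.
  move=> y; case: (ltnP y a) => ya; first by exists (inl (Ordinal ya)).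
  by exists (inr (y - a)); rewrite subnKC.
- apply: (@equipotent_inj_surj _ _
    (fun x => match x with inr i => nat_of_ord i | inl k => b + k end)).
    case=> [k|i] [l|j] /= ij;
      [congr inl | have := ltn_ord j | have := ltn_ord i | congr inr; exact: val_inj]; lia.
  move=> y; case: (ltnP y b) => yb; first by exists (inr (Ordinal yb)).
  by exists (inl (y - b)); rewrite subnKC.
- apply: (@equipotent_inj_surj _ _
    (fun x => match x with inl k => k.*2 | inr k => k.*2.+1 end)).
    case=> [i|k] [j|l] //= => [/double_inj-> // | | | [/double_inj->] //];
      by move/(congr1 odd); rewrite /= !odd_double.
  move=> y; rewrite -[y]odd_double_half; case: (odd y) => /=.
    by exists (inr y./2).
  by exists (inl y./2).
Qed.

Lemma has_card_sum A B a b :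
  has_card A a -> has_card B b -> has_card (A + B) (addinf a b).
Proof.
move=> Aa Bb.
exact: equipotent_trans (equipotent_sum Aa Bb) (equipotent_ninf_type_addinf a b).
Qed.

Lemma has_card0 (T : Type) (P : T -> bool) : P =1 xpred0 -> has_card {x | P x} (Some 0).
Proof.
move=> P0; have notP (x : {x | P x}) : False by move: (svalP x); rewrite P0.
have from0 : 'I_0 -> {x | P x} by case.
by exists (fun x => match notP x with end); exists from0 => [x|[]] //; case: (notP x).
Qed.

Lemma has_card_ninf_lt c : has_card {k | ninf_lt k c} c.
Proof.
case: c => [c|] /=.
  apply: (@equipotent_inj_surj _ _ (fun x : {k | k < c} => Ordinal (svalP x))).
    by move=> [x hx] [y hy] /= [xy]; subst; congr exist; apply: bool_irrelevance.
  by move=> y; exists (exist _ (val y) (ltn_ord y)); apply/val_inj.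
apply: (@equipotent_inj_surj _ _ (fun x : {k | true} => sval x)).
  by move=> [x hx] [y hy] /= xy; subst; congr exist; apply: bool_irrelevance.
by move=> y; exists (exist _ y isT).
Qed.

Lemma has_card_ninf_lt_eq0 c :
  c <> Some 0 -> has_card {k | ninf_lt k c && (k == 0)} (Some 1).
Proof.
move=> c_neq0; have lt0c : ninf_lt 0 c && (0 == 0) by case: c c_neq0 => [[|c]|].
exists (fun _ => ord0); exists (fun _ => exist _ 0 lt0c) => [[k hk]|[[]]] //=.
  by move/andP: (hk) => [_ /eqP k0]; subst; congr exist; apply: bool_irrelevance.
by move=> ?; apply: val_inj.
Qed.

Lemma has_card_ninf_lt_neq0 c : has_card {k | ninf_lt k c && (k != 0)} (ninf_pred c).
Proof.
apply: has_card_equipotent (has_card_ninf_lt (ninf_pred c)).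
have pred_lt k : ninf_lt k c && (k != 0) -> ninf_lt k.-1 (ninf_pred c).
  by case: c => [c|] /=; case: k => //= k; rewrite ?andbT; lia.
apply: (@equipotent_inj_surj _ _ (fun x => exist _ (sval x).-1 (pred_lt _ (svalP x)))).
  move=> [x hx] [y hy] /= [xy]; have {}xy : x = y.
    by case/andP: hx => _ /eqP x0; case/andP: hy => _ /eqP y0; lia.
  by subst; congr exist; apply: bool_irrelevance.
move=> [y hy]; have hy' : ninf_lt y.+1 c && (y.+1 != 0).
  by case: c hy {pred_lt} => [c|] //= ?; rewrite ?andbT; lia.
by exists (exist _ y.+1 hy'); congr exist; apply: bool_irrelevance.
Qed.

Definition fiber (G : graph) (x y : gV G) := {e : gE G | (gs e == x) && (gr e == y)}.
Arguments fiber : clear implicits.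

Definition fmgraph (V : finType) (A : V -> V -> ninf) : graph :=
  @Graph V {t : V * V * nat | ninf_lt t.2 (A t.1.1 t.1.2)}
    (fun t => (sval t).1.1) (fun t => (sval t).1.2).

Section FunMatrixGraph.
Variables (V : finType) (A : V -> V -> ninf).
Let G := fmgraph A.

Definition fm_edge (x y : V) (k : nat) (lt_k : ninf_lt k (A x y)) : gE G :=
  exist (fun t : V * V * nat => ninf_lt t.2 (A t.1.1 t.1.2)) (x, y, k) lt_k.

Definition edge_label (e : gE G) : nat := (sval e).2.

Lemma fm_edge0 x y : A x y <> Some 0 -> ninf_lt 0 (A x y).
Proof. by case: (A x y) => [[|c]|]. Qed.

Lemma equipotent_fiber_label (x y : V) (Q : nat -> bool) :
  equipotent {k | ninf_lt k (A x y) && Q k} {e : fiber G x y | Q (edge_label (sval e))}.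
Proof.
have lt_k (k : {k | ninf_lt k (A x y) && Q k}) : ninf_lt (sval k) (A x y).
  by case/andP: (svalP k).
have fiber_k (k : {k | ninf_lt k (A x y) && Q k}) :
    (gs (fm_edge (lt_k k)) == x) && (gr (fm_edge (lt_k k)) == y).
  by rewrite /= !eqxx.
apply: (@equipotent_sub _ _ _ (fun k => exist _ (fm_edge (lt_k k)) (fiber_k k) : fiber G x y)).
- by move=> [k hk] [l hl] [kl]; subst; congr exist; apply: bool_irrelevance.
- by move=> k; case/andP: (svalP k).
- move=> [[[[a b] k] h] hab] /= Qk; move/andP: (hab) => [/eqP ea /eqP eb]; subst.
  have hk : ninf_lt k (A a b) && Q k by rewrite h Qk.
  by exists (exist _ k hk); do 2 apply: val_inj.
Qed.

Lemma has_card_fiber_label (x y : V) (P : fiber G x y -> bool) (Q : nat -> bool) c :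
  (forall e, P e = Q (edge_label (sval e))) ->
  has_card {k | ninf_lt k (A x y) && Q k} c -> has_card {e | P e} c.
Proof.
move=> PQ Qc; apply: has_card_equipotent Qc.
apply: equipotent_trans (equipotent_sub_eq PQ) _.
exact/equipotent_sym/equipotent_fiber_label.
Qed.

Lemma has_card_fiber_fmgraph (x y : V) : has_card (fiber G x y) (A x y).
Proof.
apply: has_card_equipotent (has_card_fiber_label (P := xpredT) (Q := xpredT) (fun=> erefl) _).
  by apply: (@equipotent_sub _ _ xpredT id) => // e; exists e.
apply: has_card_equipotent (has_card_ninf_lt (A x y)).
by apply: equipotent_sub_eq => k; rewrite andbT.
Qed.
End FunMatrixGraph.

Section IsoFromFiberCard.
Variables (G : graph) (V : finType) (A : V -> V -> ninf) (f : gV G -> V).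
Hypothesis f_bij : bijective f.
Hypothesis fiber_card : forall x y, has_card (fiber G x y) (A (f x) (f y)).

Lemma equipotent_fiber_fmgraph x y : equipotent (fiber G x y) (fiber (fmgraph A) (f x) (f y)).
Proof.
apply: equipotent_trans (fiber_card x y) _.
exact: equipotent_sym (has_card_fiber_fmgraph A (f x) (f y)).
Qed.

(* One bijection per fiber, glued into a bijection of edges. *)
Let phi x y : fiber G x y -> fiber (fmgraph A) (f x) (f y) :=
  proj1_sig (constructive_indefinite_description _ (equipotent_fiber_fmgraph x y)).
Let phi_bij x y : bijective (@phi x y) :=
  proj2_sig (constructive_indefinite_description _ (equipotent_fiber_fmgraph x y)).

Let in_own_fiber (e : gE G) : (gs e == gs e) && (gr e == gr e) :=
  introT andP (conj (eqxx _) (eqxx _)).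

Let edge_map (e : gE G) : gE (fmgraph A) := sval (phi (exist _ e (in_own_fiber e))).

Lemma edge_mapE e x y (exy : (gs e == x) && (gr e == y)) : edge_map e = sval (phi (exist _ e exy)).
Proof.
have /andP [/eqP ex /eqP ey] := exy; subst.
by rewrite /edge_map; congr (sval (phi (exist _ e _))); apply: bool_irrelevance.
Qed.

Lemma fiber_ends x y (z : fiber (fmgraph A) (f x) (f y)) : gs (sval z) = f x /\ gr (sval z) = f y.
Proof. by case: z => z /= /andP [/eqP -> /eqP ->]. Qed.

Lemma graph_iso_fmgraph : graph_iso G (fmgraph A).
Proof.
have edge_map_s e : gs (edge_map e) = f (gs e).
  by case: (fiber_ends (phi (exist _ e (in_own_fiber e)))).
have edge_map_r e : gr (edge_map e) = f (gr e).
  by case: (fiber_ends (phi (exist _ e (in_own_fiber e)))).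
exists f, edge_map; split=> //; split=> //.
apply: inj_surj_bijective => [e1 e2 e12|e'].
  have s12 : gs e1 = gs e2 by apply: (bij_inj f_bij); rewrite -!edge_map_s e12.
  have r12 : gr e1 = gr e2 by apply: (bij_inj f_bij); rewrite -!edge_map_r e12.
  have e2_fiber : (gs e2 == gs e1) && (gr e2 == gr e1) by rewrite s12 r12 !eqxx.
  by move: e12; rewrite (edge_mapE e2_fiber) /edge_map => /val_inj /(bij_inj (phi_bij _ _)) [].
case: f_bij => g fK gK.
have e'_fiber : (gs e' == f (g (gs e'))) && (gr e' == f (g (gr e'))) by rewrite !gK !eqxx.
case: (phi_bij (g (gs e')) (g (gr e'))) => phi' _ phiK'.
set a := phi' (exist _ e' e'_fiber); exists (sval a).
have a_fiber := svalP a; rewrite (edge_mapE a_fiber).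
have -> : exist _ (sval a) a_fiber = a by apply: val_inj.
by rewrite /a phiK'.
Qed.
End IsoFromFiberCard.

Lemma move_equiv_trans G H K : move_equiv G H -> move_equiv H K -> move_equiv G K.
Proof. exact: rst_trans. Qed.
Lemma move_equiv_sym G H : move_equiv G H -> move_equiv H G.
Proof. exact: rst_sym. Qed.
Lemma move_equiv_step G K H : move G K -> graph_iso K H -> move_equiv G H.
Proof. by move=> GK KH; apply: rst_step; exists K. Qed.

Lemma move_equiv_moveR G K H : moveR G K -> graph_iso K H -> move_equiv G H.
Proof. by move=> GK; apply: move_equiv_step; right; left. Qed.
Lemma move_equiv_moveO G K H : moveO G K -> graph_iso K H -> move_equiv G H.
Proof. by move=> GK; apply: move_equiv_step; right; right; left. Qed.
Lemma move_equiv_moveI G K H : moveI G K -> graph_iso K H -> move_equiv G H.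
Proof. by move=> GK; apply: move_equiv_step; right; right; right. Qed.

Lemma inl_eq (A B : eqType) (x y : A) : (@inl A B x == inl y) = (x == y).
Proof. by []. Qed.
Lemma inr_eq (A B : eqType) (x y : B) : (@inr A B x == inr y) = (x == y).
Proof. by []. Qed.
Lemma inl_inr (A B : eqType) (x : A) (y : B) : (inl x == inr y) = false.
Proof. by []. Qed.
Lemma inr_inl (A B : eqType) (x : A) (y : B) : (inr y == inl x) = false.
Proof. by []. Qed.
Lemma sig_eq (T : eqType) (P : pred T) (x y : {z | P z}) : (x == y) = (sval x == sval y).
Proof. by []. Qed.
Lemma pair_eq (A B : eqType) (a a' : A) (b b' : B) : ((a,b) == (a',b')) = (a == a') && (b == b').
Proof. by []. Qed.
Definition eq_sumE := (inl_eq, inr_eq, inl_inr, inr_inl, sig_eq, pair_eq).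

Lemma exist2_eq (T : Type) (P : T -> bool) (Q : {x | P x} -> bool) x h1 h2 q1 q2 :
  exist Q (exist P x h1) q1 = exist Q (exist P x h2) q2.
Proof. have h12 := bool_irrelevance h1 h2; subst; congr exist; apply: bool_irrelevance. Qed.

Section LiftVertex.
Variables (G : graph) (v : gV G) (k : nat).
Lemma lift_v_inl w i (a : Vdel v) : (lift_v v w i == inl a :> Vsplit v k) = (w == sval a).
Proof.
rewrite /lift_v; case: insubP => [w' hw ew|hw] /=; first by rewrite inl_eq sig_eq ew.
rewrite inr_inl; apply/esym/negbTE; apply: contraNN hw => /eqP ->; exact: (svalP a).
Qed.
Lemma lift_v_inr w i (j : 'I_k) : (lift_v v w i == inr j :> Vsplit v k) = (w == v) && (i == j).
Proof.
rewrite /lift_v; case: insubP => [w' hw ew|hw] /=; first by rewrite inl_inr (negbTE hw).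
by move/negPn: hw => ->; rewrite inr_eq.
Qed.
End LiftVertex.
Definition lift_vE := (lift_v_inl, lift_v_inr).

Section FiberOutSplit.
Variables (G : graph) (v : gV G) (k : nat) (p : gE G -> 'I_k).
Let O := graphO v p.

Lemma fiber_graphO_ll a b : equipotent (fiber O (inl a) (inl b))
  (fiber G (sval a) (sval b)).
Proof.
apply: equipotent_sym.
have fits : forall e : fiber G (sval a) (sval b), gr (sval e) != v.
  by move=> [e /andP [_ /eqP ->]]; exact: (svalP b).
apply: (@equipotent_sub _ _ _ (fun e => (inl (exist _ (sval e) (fits e)) : gE O))).
- by move=> [x hx] [y hy] [xy]; subst; congr exist; apply: bool_irrelevance.
- by move=> [e he] /=; rewrite lift_vE !eq_sumE.
- case=> [e|[e i]] /=; rewrite ?lift_vE ?eq_sumE ?andbF //.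
  move=> h; exists (exist _ (sval e) h); congr inl; exact: val_inj.
Qed.

Lemma fiber_graphO_rl i b : equipotent (fiber O (inr i) (inl b))
  {e : fiber G v (sval b) | p (sval e) == i}.
Proof.
apply: equipotent_sym.
have fits : forall e : {e : fiber G v (sval b) | p (sval e) == i}, gr (sval (sval e)) != v.
  by move=> [[e he] ?] /=; move/andP: (he) => [_ /eqP ->]; exact: (svalP b).
apply: (@equipotent_sub _ _ _ (fun e => (inl (exist _ (sval (sval e)) (fits e)) : gE O))).
- by move=> [[x hx] px] [[y hy] py] [xy]; subst; apply: exist2_eq.
- move=> [[e h] he] /=; move/andP: (h) => [/eqP he1 /eqP he2].
  by rewrite lift_vE !eq_sumE /= ?he1 ?he2 he !eqxx.
- case=> [e|[e j]] /=; rewrite ?lift_vE ?eq_sumE ?andbF //.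
  case/andP=> /andP [h1 h2] h3.
  have hf : (gs (sval e) == v) && (gr (sval e) == sval b) by rewrite h1 h3.
  exists (exist _ (exist _ (sval e) hf) h2); congr inl; exact: val_inj.
Qed.

Lemma fiber_graphO_lr a i : equipotent (fiber O (inl a) (inr i))
  (fiber G (sval a) v).
Proof.
apply: equipotent_sym.
have fits : forall e : fiber G (sval a) v, gr (sval e) == v.
  by move=> [e /andP [_ /eqP ->]].
apply: (@equipotent_sub _ _ _ (fun e => (inr (exist _ (sval e) (fits e), i) : gE O))).
- by move=> [x hx] [y hy] [xy]; subst; congr exist; apply: bool_irrelevance.
- by move=> [e he] /=; rewrite lift_vE !eq_sumE; case/andP: he => -> _; rewrite eqxx.
- case=> [e|[e j]] /=; rewrite ?lift_vE ?eq_sumE ?andbF //.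
  case/andP=> h1 /eqP h2; subst j.
  have hf : (gs (sval e) == sval a) && (gr (sval e) == v) by rewrite h1 (svalP e).
  exists (exist _ (sval e) hf); congr (inr (_, _)); exact: val_inj.
Qed.

Lemma fiber_graphO_rr i j : equipotent (fiber O (inr i) (inr j))
  {e : fiber G v v | p (sval e) == i}.
Proof.
apply: equipotent_sym.
have fits : forall e : {e : fiber G v v | p (sval e) == i}, gr (sval (sval e)) == v.
  by move=> [[e he] ?] /=; move/andP: (he) => [_ /eqP ->].
apply: (@equipotent_sub _ _ _ (fun e => (inr (exist _ (sval (sval e)) (fits e), j) : gE O))).
- by move=> [[x hx] px] [[y hy] py] [xy]; subst; apply: exist2_eq.
- move=> [[e h] he] /=; move/andP: (h) => [/eqP he1 /eqP he2].
  by rewrite lift_vE !eq_sumE /= ?he1 he !eqxx.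
- case=> [e|[e j']] /=; rewrite ?lift_vE ?eq_sumE ?andbF //.
  case/andP=> /andP [h1 h2] /eqP h3; subst j'.
  have hf : (gs (sval e) == v) && (gr (sval e) == v) by rewrite h1 (svalP e).
  exists (exist _ (exist _ (sval e) hf) h2); congr (inr (_, _)); exact: val_inj.
Qed.
End FiberOutSplit.

Section FiberInSplit.
Variables (G : graph) (v : gV G) (k : nat) (p : gE G -> 'I_k).
Let I := graphI v p.

Lemma fiber_graphI_ll a b : equipotent (fiber I (inl a) (inl b))
  (fiber G (sval a) (sval b)).
Proof.
apply: equipotent_sym.
have fits : forall e : fiber G (sval a) (sval b), gs (sval e) != v.
  by move=> [e /andP [/eqP -> _]]; exact: (svalP a).
apply: (@equipotent_sub _ _ _ (fun e => (inl (exist _ (sval e) (fits e)) : gE I))).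
- by move=> [x hx] [y hy] [xy]; subst; congr exist; apply: bool_irrelevance.
- by move=> [e he] /=; rewrite lift_vE !eq_sumE.
- case=> [e|[e i]] /=; rewrite ?lift_vE ?eq_sumE //.
  move=> h; exists (exist _ (sval e) h); congr inl; exact: val_inj.
Qed.

Lemma fiber_graphI_lr a j : equipotent (fiber I (inl a) (inr j))
  {e : fiber G (sval a) v | p (sval e) == j}.
Proof.
apply: equipotent_sym.
have fits : forall e : {e : fiber G (sval a) v | p (sval e) == j}, gs (sval (sval e)) != v.
  by move=> [[e he] ?] /=; move/andP: (he) => [/eqP -> _]; exact: (svalP a).
apply: (@equipotent_sub _ _ _ (fun e => (inl (exist _ (sval (sval e)) (fits e)) : gE I))).
- by move=> [[x hx] px] [[y hy] py] [xy]; subst; apply: exist2_eq.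
- move=> [[e h] he] /=; move/andP: (h) => [/eqP he1 /eqP he2].
  by rewrite lift_vE !eq_sumE /= ?he1 ?he2 he !eqxx.
- case=> [e|[e i]] /=; rewrite ?lift_vE ?eq_sumE //.
  case/andP=> h1 /andP [h2 h3].
  have hf : (gs (sval e) == sval a) && (gr (sval e) == v) by rewrite h1 h2.
  exists (exist _ (exist _ (sval e) hf) h3); congr inl; exact: val_inj.
Qed.

Lemma fiber_graphI_rl i b : equipotent (fiber I (inr i) (inl b))
  (fiber G v (sval b)).
Proof.
apply: equipotent_sym.
have fits : forall e : fiber G v (sval b), gs (sval e) == v.
  by move=> [e /andP [/eqP -> _]].
apply: (@equipotent_sub _ _ _ (fun e => (inr (exist _ (sval e) (fits e), i) : gE I))).
- by move=> [x hx] [y hy] [xy]; subst; congr exist; apply: bool_irrelevance.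
- by move=> [e he] /=; rewrite lift_vE !eq_sumE; case/andP: he => _ ->; rewrite eqxx.
- case=> [e|[e j]] /=; rewrite ?lift_vE ?eq_sumE //.
  case/andP=> /eqP h2 h1; subst j.
  have hf : (gs (sval e) == v) && (gr (sval e) == sval b) by rewrite h1 (svalP e).
  exists (exist _ (sval e) hf); congr (inr (_, _)); exact: val_inj.
Qed.

Lemma fiber_graphI_rr i j : equipotent (fiber I (inr i) (inr j))
  {e : fiber G v v | p (sval e) == j}.
Proof.
apply: equipotent_sym.
have fits : forall e : {e : fiber G v v | p (sval e) == j}, gs (sval (sval e)) == v.
  by move=> [[e he] ?] /=; move/andP: (he) => [/eqP -> _].
apply: (@equipotent_sub _ _ _ (fun e => (inr (exist _ (sval (sval e)) (fits e), i) : gE I))).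
- by move=> [[x hx] px] [[y hy] py] [xy]; subst; apply: exist2_eq.
- move=> [[e h] he] /=; move/andP: (h) => [/eqP he1 /eqP he2].
  by rewrite lift_vE !eq_sumE /= he2 he !eqxx.
- case=> [e|[e i']] /=; rewrite ?lift_vE ?eq_sumE //.
  case/andP=> /eqP h3 /andP [h1 h2]; subst i'.
  have hf : (gs (sval e) == v) && (gr (sval e) == v) by rewrite h1 (svalP e).
  exists (exist _ (exist _ (sval e) hf) h2); congr (inr (_, _)); exact: val_inj.
Qed.
End FiberInSplit.

Section FiberReduce.
Variables (G : graph) (u v : gV G) (f : gE G) (hv : v != u) (hf : gr f != u).
Let R := graphR hv hf.

Lemma fiber_graphR a b : equipotent (fiber R a b)
  (fiber G (sval a) (sval b) + {e : gE G | (gr e == u) && ((v == sval a) && (gr f == sval b))}).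
Proof.
apply: equipotent_sym.
have fits : forall e : fiber G (sval a) (sval b), (gs (sval e) != u) && (gr (sval e) != u).
  by move=> e; have /andP [/eqP-> /eqP->] := svalP e; rewrite (svalP a) (svalP b).
have fits_r (e : {e : gE G | (gr e == u) && ((v == sval a) && (gr f == sval b))}) :
    gr (sval e) == u.
  by case/andP: (svalP e).
apply: (@equipotent_sub _ _ _ (fun x => match x with
    | inl e => (inl (exist _ (sval e) (fits e)) : gE R)
    | inr e => inr (exist _ (sval e) (fits_r e)) end)).
- case=> [[x hx]|[x hx]] [[y hy]|[y hy]] //= [xy]; subst; f_equal; f_equal; apply: bool_irrelevance.
- case=> [[e h]|[e h]] /=; rewrite !eq_sumE /=; first by rewrite h.
  by case/andP: h => _ /andP [-> ->].
- case=> [e|e] /=; rewrite !eq_sumE /=.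
  + move=> h; exists (inl (exist _ (sval e) h)); congr inl; exact: val_inj.
  + move=> h; exists (inr (exist _ (sval e) (introT andP (conj (svalP e) h)))).
    congr inr; exact: val_inj.
Qed.

Lemma has_card_in_edges (n : ninf) (c : bool) :
  (forall e, gr e = u -> gs e = v) -> has_card (fiber G v u) n ->
  has_card {e : gE G | (gr e == u) && c} (if c then n else Some 0).
Proof.
move=> in_from_v hn; case: c; last by apply: has_card0 => e; rewrite andbF.
apply: has_card_equipotent hn; apply: equipotent_sym.
apply: (@equipotent_sub _ _ _ (fun e : fiber G v u => sval e)).
- by move=> [x hx] [y hy] /= xy; subst; congr exist; apply: bool_irrelevance.
- by move=> e; case/andP: (svalP e) => _ ->.
- move=> e /andP [h _].
  have h2 : (gs e == v) && (gr e == u) by rewrite h (in_from_v e (eqP h)) eqxx.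
  by exists (exist _ e h2).
Qed.
End FiberReduce.

Section FiberPredicate.
Variables (V : finType) (A : V -> V -> ninf) (x y : V).
Implicit Type P : fiber (fmgraph A) x y -> bool.

Lemma has_card_fiber_all P : (forall e, P e) -> has_card {e | P e} (A x y).
Proof.
move=> Pe; apply: (has_card_fiber_label (Q := xpredT)) => [e|]; first by rewrite Pe.
apply: has_card_equipotent (has_card_ninf_lt _).
by apply: equipotent_sub_eq => k; rewrite andbT.
Qed.

Lemma has_card_fiber_none P : (forall e, ~~ P e) -> has_card {e | P e} (Some 0).
Proof. by move=> nPe; apply: has_card0 => e; apply/negbTE. Qed.

Lemma has_card_fiber_label0 P :
  A x y <> Some 0 -> (forall e, P e = (edge_label (sval e) == 0)) -> has_card {e | P e} (Some 1).
Proof. by move=> Axy PE; apply: has_card_fiber_label PE (has_card_ninf_lt_eq0 Axy). Qed.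

Lemma has_card_fiber_label_neq0 P :
  (forall e, P e = (edge_label (sval e) != 0)) -> has_card {e | P e} (ninf_pred (A x y)).
Proof. by move=> PE; apply: has_card_fiber_label PE (has_card_ninf_lt_neq0 _). Qed.
End FiberPredicate.

Definition part0 : 'I_2 := ord0.
Definition part1 : 'I_2 := ord_max.

Lemma I2P (i : 'I_2) : i = part0 \/ i = part1.
Proof. by case: i => [[|[|?]] lti] //; [left | right]; apply: val_inj. Qed.

(* Out-splitting at [v] into [inr part0], which emits only the edge [(v, t, 0)], and
   [inr part1]. *)
Section OutSplitEdge.
Variables (V : finType) (A : V -> V -> ninf) (v t : V).
Hypothesis t_neq_v : t != v.
Hypothesis Avt_neq0 : A v t <> Some 0.
Let G := fmgraph A.

Definition split_edge_part (e : gE G) : 'I_2 :=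
  if (gr e == t) && (edge_label e == 0) then part0 else part1.

Hypothesis other_out_edge : exists e : gE G, gs e = v /\ split_edge_part e = part1.

Definition out_split_mx (x y : @Vsplit G v 2) : ninf :=
  match x, y with
  | inl a, inl b => A (sval a) (sval b)
  | inl a, inr _ => A (sval a) v
  | inr i, inl b => if i == part0 then Some (sval b == t : nat)
                    else if sval b == t then ninf_pred (A v t) else A v (sval b)
  | inr i, inr _ => if i == part0 then Some 0 else A v v
  end.

Let e0 := fm_edge (fm_edge0 Avt_neq0).

Lemma moveO_split_edge : moveO G (@graphO G v 2 split_edge_part).
Proof.
exists v, 2, split_edge_part; split; first by move=> no_out; apply: (no_out e0).
split.
  by move=> i; case: (I2P i) => ->; [exists e0; rewrite /split_edge_part /= !eqxx | ].
split=> // i j.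
have part0_finite : part_finite (fun e : gE G => gs e = v) split_edge_part part0.
  exists [:: e0] => -[[[a b] k] lt_k] /= av; rewrite /split_edge_part /edge_label /=.
  by case: ifP => // /andP [/eqP bt /eqP k0] _; left; apply: val_inj; rewrite /= av bt k0.
by case: (I2P i) => ->; case: (I2P j) => ->; rewrite ?eqxx // => _; [left | right].
Qed.

Lemma has_card_fiber_split_edge x y :
  has_card (fiber (@graphO G v 2 split_edge_part) x y) (out_split_mx x y).
Proof.
case: x y => [a|i] [b|j] /=.
- exact: has_card_equipotent (fiber_graphO_ll _ _ _) (has_card_fiber_fmgraph _ _ _).
- exact: has_card_equipotent (fiber_graphO_lr _ _ _) (has_card_fiber_fmgraph _ _ _).
- apply: has_card_equipotent (fiber_graphO_rl _ _ _) _.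
  have partE (e : fiber G v (sval b)) : split_edge_part (sval e) =
      if (sval b == t) && (edge_label (sval e) == 0) then part0 else part1.
    by rewrite /split_edge_part; case/andP: (svalP e) => _ /eqP->.
  case: (I2P i) => -> /=; case: (sval b =P t) => [bt|/eqP bt] /=.
  + apply: has_card_fiber_label0 => [|e]; first by rewrite bt.
    by rewrite partE (introT eqP bt); case: (edge_label _ == 0).
  + by apply: has_card_fiber_none => e; rewrite partE (negbTE bt).
  + rewrite -bt; apply: has_card_fiber_label_neq0 => e.
    by rewrite partE (introT eqP bt); case: (edge_label _ == 0).
  + by apply: has_card_fiber_all => e; rewrite partE (negbTE bt).
- apply: has_card_equipotent (fiber_graphO_rr _ _ _ _) _.
  have partE (e : fiber G v v) : split_edge_part (sval e) = part1.
    by rewrite /split_edge_part; case/andP: (svalP e) => _ /eqP->; rewrite eq_sym (negbTE t_neq_v).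
  by case: (I2P i) => -> /=; [apply: has_card_fiber_none | apply: has_card_fiber_all] => e;
    rewrite partE.
Qed.

Lemma move_equiv_split_edge : move_equiv G (fmgraph out_split_mx).
Proof.
apply: move_equiv_moveO moveO_split_edge _.
by apply: (graph_iso_fmgraph (f := id)); [exists id | exact: has_card_fiber_split_edge].
Qed.
End OutSplitEdge.
Arguments out_split_mx {V} A v t x y.

(* In-splitting at [v] into [inr part0], which receives the edges from [s] (all of them if
   [whole], else only the one labelled [0]), and [inr part1]. *)
Section InSplitSource.
Variables (V : finType) (A : V -> V -> ninf) (v s : V) (whole : bool).
Hypothesis s_neq_v : s != v.
Hypothesis Asv_neq0 : A s v <> Some 0.
Let G := fmgraph A.
Hypothesis v_regular : regular (G := G) v.

Definition split_source_part (e : gE G) : 'I_2 :=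
  if (gs e == s) && (whole || (edge_label e == 0)) then part0 else part1.

Hypothesis other_in_edge : exists e : gE G, gr e = v /\ split_source_part e = part1.

Definition in_split_mx (x y : @Vsplit G v 2) : ninf :=
  match x, y with
  | inl a, inl b => A (sval a) (sval b)
  | inl a, inr j =>
      if sval a == s then
        if j == part0 then (if whole then A s v else Some 1)
        else (if whole then Some 0 else ninf_pred (A s v))
      else if j == part0 then Some 0 else A (sval a) v
  | inr _, inl b => A v (sval b)
  | inr _, inr j => if j == part0 then Some 0 else A v v
  end.

Lemma moveI_split_source : moveI G (@graphI G v 2 split_source_part).
Proof.
pose e0 := fm_edge (fm_edge0 Asv_neq0).
exists v, 2, split_source_part; split=> //; split; first by move=> no_in; apply: (no_in e0).
split=> // i; case: (I2P i) => -> //.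
by exists e0; rewrite /split_source_part /= eqxx orbT.
Qed.

Lemma has_card_fiber_split_source x y :
  has_card (fiber (@graphI G v 2 split_source_part) x y) (in_split_mx x y).
Proof.
case: x y => [a|i] [b|j] /=.
- exact: has_card_equipotent (fiber_graphI_ll _ _ _) (has_card_fiber_fmgraph _ _ _).
- apply: has_card_equipotent (fiber_graphI_lr _ _ _) _.
  have partE (e : fiber G (sval a) v) : split_source_part (sval e) =
      if (sval a == s) && (whole || (edge_label (sval e) == 0)) then part0 else part1.
    by rewrite /split_source_part; case/andP: (svalP e) => /eqP->.
  case: (sval a =P s) => [a_s|/eqP a_s]; last first.
    by case: (I2P j) => -> /=; [apply: has_card_fiber_none | apply: has_card_fiber_all] => e;
      rewrite partE (negbTE a_s).
  rewrite -a_s; case: (I2P j) => -> /=; case: whole partE => partE.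
  + by apply: has_card_fiber_all => e; rewrite partE (introT eqP a_s).
  + apply: has_card_fiber_label0 => [|e]; first by rewrite a_s.
    by rewrite partE (introT eqP a_s); case: (edge_label _ == 0).
  + by apply: has_card_fiber_none => e; rewrite partE (introT eqP a_s).
  + apply: has_card_fiber_label_neq0 => e.
    by rewrite partE (introT eqP a_s); case: (edge_label _ == 0).
- exact: has_card_equipotent (fiber_graphI_rl _ _ _) (has_card_fiber_fmgraph _ _ _).
- apply: has_card_equipotent (fiber_graphI_rr _ _ _ _) _.
  have partE (e : fiber G v v) : split_source_part (sval e) = part1.
    rewrite /split_source_part; case/andP: (svalP e) => /eqP-> _.
    by rewrite eq_sym (negbTE s_neq_v).
  by case: (I2P j) => -> /=; [apply: has_card_fiber_none | apply: has_card_fiber_all] => e;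
    rewrite partE.
Qed.

Lemma move_equiv_split_source : move_equiv G (fmgraph in_split_mx).
Proof.
apply: move_equiv_moveI moveI_split_source _.
by apply: (graph_iso_fmgraph (f := id)); [exists id | exact: has_card_fiber_split_source].
Qed.
End InSplitSource.
Arguments in_split_mx {V} A v s whole x y.

Lemma mem_In (T : eqType) (x : T) (s : seq T) : x \in s -> List.In x s.
Proof. by elim: s => //= y s IHs; rewrite in_cons => /orP [/eqP-> | /IHs]; [left | right]. Qed.

Lemma regular_fmgraph (V : finType) (A : V -> V -> ninf) u (d : V -> nat) :
  (forall y, A u y = Some (d y)) -> (exists y, 0 < d y) -> regular (G := fmgraph A) u.
Proof.
move=> Au [y dy]; have lt0 : ninf_lt 0 (A u y) by rewrite Au.
case=> [sink|inf]; first exact: (sink (fm_edge lt0)).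
apply: inf; exists (pmap insub [seq (u, y, k) | y <- enum V, k <- iota 0 (d y)]).
move=> [[[x y'] k] lt_k] /= xu; subst x; apply: mem_In; rewrite mem_pmap_sub /=.
apply: (@allpairs_f_dep _ (fun _ => nat) _ (fun y k => (u, y, k))); first by rewrite mem_enum.
by move: lt_k; rewrite /= Au mem_iota.
Qed.

Section ReduceVertex.
Variables (V : finType) (A : V -> V -> ninf) (u s t : V).
Hypothesis t_neq_u : t != u.
Hypothesis s_neq_u : s != u.
Hypothesis Au : forall y, A u y = Some (y == t : nat).
Hypothesis in_from_s : forall x, x != s -> A x u = Some 0.
Let G := fmgraph A.

Definition reduce_mx (a b : @Vdel G u) : ninf :=
  addinf (A (sval a) (sval b)) (if sval b == t then A (sval a) u else Some 0).

Let lt0_ut : ninf_lt 0 (A u t). Proof. by rewrite Au eqxx. Qed.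
Let f := fm_edge lt0_ut.
Let gr_f : gr f != u := t_neq_u.

Lemma out_edge_reduce (e : gE G) : gs e = u -> e = f.
Proof.
move: e => [[[x y] k] lt_k] /= xu; subst x; apply: val_inj => /=.
by move: lt_k; rewrite /= Au; case: eqP => // -> /=; case: k.
Qed.

Lemma in_edge_reduce (e : gE G) : gr e = u -> gs e = s.
Proof.
move: e => [[[x y] k] lt_k] /= yu; subst y; apply/eqP; apply: contraT => xs.
by move: lt_k; rewrite /= in_from_s.
Qed.

Lemma moveR_reduce : moveR G (@graphR G u s f s_neq_u gr_f).
Proof.
exists u, s, f, s_neq_u, gr_f; split.
  move=> [sink | inf]; first exact: (sink f).
  by apply: inf; exists [:: f] => e /out_edge_reduce->; left.
by split=> //; split; [exact: out_edge_reduce | split=> //; exact: in_edge_reduce].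
Qed.

Lemma has_card_fiber_reduce a b :
  has_card (fiber (@graphR G u s f s_neq_u gr_f) a b) (reduce_mx a b).
Proof.
have -> : reduce_mx a b = addinf (A (sval a) (sval b))
    (if (s == sval a) && (gr f == sval b) then A s u else Some 0).
  rewrite /reduce_mx [gr f == _]eq_sym; case: (sval b =P t) => _; rewrite ?andbT ?andbF //.
  by case: (s =P sval a) => [<- | /eqP as_] //; rewrite in_from_s // eq_sym.
apply: has_card_equipotent (fiber_graphR a b) _.
apply: has_card_sum; first exact: has_card_fiber_fmgraph.
apply: has_card_in_edges; first exact: in_edge_reduce.
exact: has_card_fiber_fmgraph.
Qed.

Lemma move_equiv_reduce (W : finType) (h : @Vdel G u -> W) (A' : W -> W -> ninf) :
  bijective h -> (forall a b, A' (h a) (h b) = reduce_mx a b) -> move_equiv G (fmgraph A').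
Proof.
move=> h_bij A'E; apply: move_equiv_moveR moveR_reduce _.
by apply: (@graph_iso_fmgraph (@graphR G u s f s_neq_u gr_f) W A' h h_bij) => a b;
  rewrite A'E; exact: has_card_fiber_reduce.
Qed.
End ReduceVertex.
Arguments reduce_mx {V} A u t a b.

(* After splitting [v] and removing the copy [inr part0], the other copy takes the place
   of [v]. *)
Section MergeCopy.
Variables (V : finType) (A : V -> V -> ninf) (v : V).
Let VS := @Vsplit (fmgraph A) v 2.

Definition merge_copy (x : {w : VS | w != inr part0}) : V :=
  match sval x with inl w => sval w | inr _ => v end.

Lemma merge_copyP (x : {w : VS | w != inr part0}) :
  (exists w : @Vdel (fmgraph A) v, sval x = inl w /\ merge_copy x = sval w) \/
  (sval x = inr part1 /\ merge_copy x = v).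
Proof.
rewrite /merge_copy; case: x => [[w|i] i_ok] /=; first by left; exists w.
by right; case: (I2P i) i_ok => -> //; rewrite eqxx.
Qed.

Lemma merge_copy_bij : bijective merge_copy.
Proof.
apply: inj_surj_bijective => [x y|y].
  case: (merge_copyP x) => [[w [xE ->]] | [xE ->]];
    case: (merge_copyP y) => [[w' [yE ->]] | [yE ->]].
  - move=> ww'; apply: val_inj; change (sval x = sval y).
    by rewrite xE yE; congr inl; apply: val_inj.
  - by move=> wv; have := svalP w; rewrite wv eqxx.
  - by move=> vw; have := svalP w'; rewrite -vw eqxx.
  - by move=> _; apply: val_inj; change (sval x = sval y); rewrite xE yE.
have inr1_ok : inr part1 != inr part0 :> VS by [].
case: (y =P v) => [-> | /eqP yv]; first by exists (exist (fun w : VS => w != inr part0) _ inr1_ok).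
have inl_ok : inl (exist _ y yv) != inr part0 :> VS by [].
by exists (exist (fun w : VS => w != inr part0) _ inl_ok).
Qed.
End MergeCopy.

Lemma addinf0r x : addinf x (Some 0) = x. Proof. by case: x => [x|] //=; rewrite addn0. Qed.
Lemma addinf0l x : addinf (Some 0) x = x. Proof. by case: x. Qed.

Ltac eq_cases :=
  repeat first
    [ match goal with H : is_true (?a != ?a) |- _ => exact: False_ind _ (elimN eqP H erefl) end
    | progress rewrite ?eqxx ?andbT ?andbF ?addinf0r ?addinf0l /=
    | match goal with |- context [?a == ?b] => case: (a =P b) => [?|?]; subst end ];
  try done.

Ltac merge_copy_cases a b :=
  case: (merge_copyP a) => [[[xa xa_ok] [-> ->]] | [-> ->]];
  case: (merge_copyP b) => [[[xb xb_ok] [-> ->]] | [-> ->]]; rewrite /= ?eq_sumE /=.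

Definition redirect_mx (V : finType) (A : V -> V -> ninf) (u t s : V) (x y : V) : ninf :=
  if (x == s) && (y == u) then Some 0
  else if (x == s) && (y == t) then addinf (A s t) (A s u) else A x y.

(* In-split [u] so that one copy receives exactly the edges from [s1], and remove that
   copy: its in-edges are redirected to [t]. *)
Lemma move_equiv_redirect (V : finType) (A : V -> V -> ninf) (u t s1 s2 : V) :
  t != u -> (forall y, A u y = Some (y == t : nat)) -> s1 != s2 ->
  A s1 u != Some 0 -> A s2 u != Some 0 -> move_equiv (fmgraph A) (fmgraph (redirect_mx A u t s1)).
Proof.
move=> t_neq_u Au s12 As1u As2u.
have Auu : A u u = Some 0 by rewrite Au eq_sym (negbTE t_neq_u).
have s1_neq_u : s1 != u by apply: contraNneq As1u => ->; rewrite Auu.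
have u_regular : regular (G := fmgraph A) u.
  by apply: (regular_fmgraph (d := fun y => (y == t : nat))) => //; exists t; rewrite eqxx.
have other_in : exists e : gE (fmgraph A),
    gr e = u /\ split_source_part s1 true e = part1.
  exists (fm_edge (fm_edge0 (elimN eqP As2u))).
  by rewrite /split_source_part /= eq_sym (negbTE s12).
apply: move_equiv_trans (move_equiv_split_source s1_neq_u (elimN eqP As1u) u_regular other_in) _.
set A1 := in_split_mx A u s1 true.
pose s1' : @Vsplit (fmgraph A) u 2 := inl (exist _ s1 s1_neq_u).
pose t' : @Vsplit (fmgraph A) u 2 := inl (exist _ t t_neq_u).
have A1_out y : A1 (inr part0) y = Some (y == t' : nat).
  by case: y => [b|j] /=; [rewrite Au | case: ifP; rewrite // Auu].
have A1_in x : x != s1' -> A1 x (inr part0) = Some 0.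
  case: x => [a|i] //= a_s1; rewrite /A1 /in_split_mx /=.
  by case: eqP => // a_s1'; case/negP: a_s1; apply/eqP; congr inl; apply: val_inj.
apply: (move_equiv_reduce (t := t') _ _ A1_out A1_in (merge_copy_bij A u)) => // a b.
rewrite /reduce_mx /A1 /in_split_mx /redirect_mx; merge_copy_cases a b; rewrite ?Au; eq_cases.
Qed.

Section RemoveVertex.
Variables (V : finType) (u t : V) (W : finType).
Hypothesis t_neq_u : t != u.

Lemma move_equiv_remove_single_source (A : V -> V -> ninf) (h : @Vdel (fmgraph A) u -> W)
    (A' : W -> W -> ninf) :
  (forall y, A u y = Some (y == t : nat)) ->
  (forall x y, A x u != Some 0 -> A y u != Some 0 -> x = y) ->
  bijective h -> (forall a b, A' (h a) (h b) = reduce_mx A u t a b) ->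
  move_equiv (fmgraph A) (fmgraph A').
Proof.
move=> Au single h_bij A'E.
have Auu : A u u = Some 0 by rewrite Au eq_sym (negbTE t_neq_u).
case: (pickP (fun x => A x u != Some 0)) => [s Asu | no_source].
  have s_neq_u : s != u by apply: contraNneq Asu => ->; rewrite Auu.
  apply: (move_equiv_reduce t_neq_u s_neq_u Au _ h_bij A'E) => x xs.
  by apply/eqP; apply: contraNT xs => Axu; apply/eqP; apply: single.
apply: (move_equiv_reduce t_neq_u t_neq_u Au _ h_bij A'E) => x _.
by apply/eqP; move/negbFE: (no_source x).
Qed.

Lemma move_equiv_remove_vertex (A : V -> V -> ninf) (h : @Vdel (fmgraph A) u -> W)
    (A' : W -> W -> ninf) :
  (forall y, A u y = Some (y == t : nat)) ->
  bijective h -> (forall a b, A' (h a) (h b) = reduce_mx A u t a b) ->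
  move_equiv (fmgraph A) (fmgraph A').
Proof.
move: {2}#|[set x | A x u != Some 0]| (leqnn #|[set x | A x u != Some 0]|) => n.
elim: n A h => [|n IHn] A h sources_le Au h_bij A'E;
  case: (boolP [exists x, exists y, [&& x != y, A x u != Some 0 & A y u != Some 0]]);
  try (move=> no_two; apply: move_equiv_remove_single_source Au _ h_bij A'E => x y Axu Ayu;
       apply/eqP; apply: contraNT no_two => xy; apply/existsP; exists x; apply/existsP; exists y;
       by rewrite xy Axu Ayu).
- move/existsP=> [x /existsP [y /and3P [_ Axu _]]].
  by move: sources_le; rewrite leqn0 cards_eq0 => /eqP/setP/(_ x); rewrite !inE Axu.
move/existsP=> [s1 /existsP [s2 /and3P [s12 As1u As2u]]].
have s1_neq_u : s1 != u by apply: contraNneq As1u => ->; rewrite Au [u == t]eq_sym (negbTE t_neq_u).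
apply: move_equiv_trans (move_equiv_redirect t_neq_u Au s12 As1u As2u) _.
apply: (IHn (redirect_mx A u t s1) h) => //.
- have -> : [set x | redirect_mx A u t s1 x u != Some 0] = [set x | A x u != Some 0] :\ s1.
    by apply/setP => x; rewrite !inE /redirect_mx eqxx andbT; case: (x =P s1) => [->|].
  by move: sources_le; rewrite (cardsD1 s1) inE As1u.
- by move=> y; rewrite /redirect_mx eq_sym (negbTE s1_neq_u) /= Au.
- move=> a b; rewrite A'E /reduce_mx /redirect_mx.
  by move: (svalP a) (svalP b); move: (sval a) (sval b) => x y x_ok y_ok; eq_cases.
Qed.
End RemoveVertex.

Definition move_edge_mx (V : finType) (A : V -> V -> ninf) (w s t : V) (x y : V) : ninf :=
  if (x == w) && (y == t) then ninf_pred (A w t)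
  else if (x == s) && (y == t) then addinf (A s t) (Some 1) else A x y.

(* Split off one edge [w -> t] from a vertex [w] entered only by a single edge from [s],
   and reduce it: the edge [s -> w -> t] becomes an edge [s -> t]. *)
Lemma move_equiv_move_edge (V : finType) (A : V -> V -> ninf) (w s t : V) (d : V -> nat) :
  s != w -> (forall x, A x w = Some (x == s : nat)) -> (forall y, A w y = Some (d y)) ->
  0 < d t -> (exists e : gE (fmgraph A), gs e = w /\ split_edge_part t e = part1) ->
  move_equiv (fmgraph A) (fmgraph (move_edge_mx A w s t)).
Proof.
move=> s_neq_w A_w Aw dt other_out.
have Aww : A w w = Some 0 by rewrite A_w eq_sym (negbTE s_neq_w).
have t_neq_w : t != w by apply: contraTneq dt => ->; move: (Aw w); rewrite Aww => -[<-].
have Awt : A w t <> Some 0 by rewrite Aw => -[dt0]; rewrite dt0 in dt.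
apply: move_equiv_trans (move_equiv_split_edge t_neq_w Awt other_out) _.
set A1 := out_split_mx A w t.
pose s' : @Vsplit (fmgraph A) w 2 := inl (exist _ s s_neq_w).
pose t' : @Vsplit (fmgraph A) w 2 := inl (exist _ t t_neq_w).
have A1_out y : A1 (inr part0) y = Some (y == t' : nat) by case: y.
have A1_in x : x != s' -> A1 x (inr part0) = Some 0.
  case: x => [a|i] a_s; rewrite /A1 /out_split_mx /=; last by rewrite Aww; case: ifP.
  by rewrite A_w; case: eqP => // a_s'; case/negP: a_s; apply/eqP; congr inl; apply: val_inj.
apply: (move_equiv_reduce (t := t') _ _ A1_out A1_in (merge_copy_bij A w)) => // a b.
rewrite /reduce_mx /A1 /out_split_mx /move_edge_mx.
by merge_copy_cases a b; rewrite ?A_w ?Aww; eq_cases.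
Qed.

Lemma sum_nat_gt0P (I : finType) (P : pred I) (F : I -> nat) :
  0 < \sum_(i | P i) F i -> exists2 i, P i & 0 < F i.
Proof.
rewrite lt0n sum_nat_eq0 => /forallPn [i]; rewrite negb_imply -lt0n => /andP [Pi Fi].
by exists i.
Qed.

(* Removing a vertex [w] entered by a single edge, from [s]: row [w] is added to row [s]. *)
Definition collapse_mx (V : finType) (A : V -> V -> ninf) (w s : V) (a b : @Vdel (fmgraph A) w) :
    ninf :=
  addinf (A (sval a) (sval b)) (if sval a == s then A w (sval b) else Some 0).
Arguments collapse_mx {V} A w s a b.

Section CollapseVertex.
Variables (V : finType) (W : finType).

Lemma move_equiv_collapse_single_out (A : V -> V -> ninf) (w s t : V)
    (h : @Vdel (fmgraph A) w -> W) (A' : W -> W -> ninf) :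
  s != w -> t != w -> (forall x, A x w = Some (x == s : nat)) ->
  (forall y, A w y = Some (y == t : nat)) ->
  bijective h -> (forall a b, A' (h a) (h b) = collapse_mx A w s a b) ->
  move_equiv (fmgraph A) (fmgraph A').
Proof.
move=> s_neq_w t_neq_w A_w Aw h_bij A'E.
have A_w0 x : x != s -> A x w = Some 0 by move=> xs; rewrite A_w (negbTE xs).
apply: (move_equiv_reduce t_neq_w s_neq_w Aw A_w0 h_bij) => a b.
rewrite A'E /collapse_mx /reduce_mx.
by move: (svalP a) (svalP b); move: (sval a) (sval b) => x y x_ok y_ok; rewrite ?Aw ?A_w; eq_cases.
Qed.

Lemma exists_other_out_edge (A : V -> V -> ninf) (w t : V) (d : V -> nat) :
  (forall y, A w y = Some (d y)) -> 1 < \sum_y d y ->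
  exists e : gE (fmgraph A), gs e = w /\ split_edge_part t e = part1.
Proof.
move=> Aw sum_gt1; case: (leqP 2 (d t)) => [dt | dt].
  have lt1 : ninf_lt 1 (A w t) by rewrite Aw.
  by exists (fm_edge lt1); rewrite /split_edge_part /edge_label /= andbF.
have [t' t't dt'] : exists2 t', t' != t & 0 < d t'.
  by apply: sum_nat_gt0P; move: sum_gt1; rewrite (bigD1 t) //=; lia.
have lt0 : ninf_lt 0 (A w t') by rewrite Aw.
by exists (fm_edge lt0); rewrite /split_edge_part /= (negbTE t't).
Qed.

Lemma move_equiv_collapse (A : V -> V -> ninf) (w s : V) (d : V -> nat)
    (h : @Vdel (fmgraph A) w -> W) (A' : W -> W -> ninf) :
  s != w -> (forall x, A x w = Some (x == s : nat)) -> (forall y, A w y = Some (d y)) ->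
  0 < \sum_y d y -> bijective h -> (forall a b, A' (h a) (h b) = collapse_mx A w s a b) ->
  move_equiv (fmgraph A) (fmgraph A').
Proof.
move=> s_neq_w; move: {2}(\sum_y d y) (leqnn (\sum_y d y)) => n.
elim: n A d h => [|n IHn] A d h sum_le A_w Aw sum_gt0 h_bij A'E; first lia.
have Aww : A w w = Some 0 by rewrite A_w eq_sym (negbTE s_neq_w).
have [t _ dt] := sum_nat_gt0P sum_gt0.
have t_neq_w : t != w by apply: contraTneq dt => ->; move: (Aw w); rewrite Aww => -[<-].
have sum_dE : \sum_y d y = d t + \sum_(y | y != t) d y by rewrite (bigD1 t).
case: (leqP (\sum_y d y) 1) => [sum_le1 | sum_gt1].
  apply: (move_equiv_collapse_single_out s_neq_w t_neq_w A_w _ h_bij A'E) => y.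
  rewrite Aw; case: (y =P t) => [-> | /eqP yt]; first by congr Some; lia.
  by move: sum_le1; rewrite sum_dE (bigD1 y) //=; case: (d y) => //; lia.
apply: move_equiv_trans
  (move_equiv_move_edge s_neq_w A_w Aw dt (exists_other_out_edge t Aw sum_gt1)) _.
pose d' y := if y == t then (d t).-1 else d y.
have sum_d'E : \sum_y d' y = (d t).-1 + \sum_(y | y != t) d y.
  by rewrite (bigD1 t) //= /d' eqxx; congr addn; apply: eq_bigr => y /negbTE->.
apply: (IHn (move_edge_mx A w s t) d' h) => //.
- by rewrite sum_d'E; lia.
- by move=> x; rewrite /move_edge_mx [w == t]eq_sym (negbTE t_neq_w) !andbF A_w.
- move=> y; rewrite /move_edge_mx /d' eqxx /= [w == s]eq_sym (negbTE s_neq_w) /=.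
  by case: (y =P t) => _; rewrite Aw.
- by rewrite sum_d'E; lia.
- move=> a b; rewrite A'E /collapse_mx /move_edge_mx.
  move: (svalP a) (svalP b); move: (sval a) (sval b) => x y x_ok y_ok; rewrite ?Aw; eq_cases.
  by case: (A s t) => //= ?; congr Some; lia.
Qed.
End CollapseVertex.

(* Column [u] is added to column [t], using up one edge [u -> t]. *)
Definition add_col_mx (V : finType) (A : V -> V -> ninf) (u t : V) (x y : V) : ninf :=
  if y == t then addinf (if x == u then ninf_pred (A u t) else A x t) (A x u) else A x y.

(* Row [i] is added to row [i'], using up one edge [i' -> i]. *)
Definition add_row_mx (V : finType) (A : V -> V -> ninf) (i i' : V) (x y : V) : ninf :=
  if x == i' then addinf (if y == i then ninf_pred (A i' i) else A i' y) (A i y) else A x y.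

(* Split the edge [u -> t] off [u]; the split-off copy is then removed, redirecting its
   in-edges to [t]. *)
Lemma move_equiv_add_col (V : finType) (A : V -> V -> ninf) (u t : V) :
  t != u -> A u t <> Some 0 -> A u u <> Some 0 ->
  move_equiv (fmgraph A) (fmgraph (add_col_mx A u t)).
Proof.
move=> t_neq_u Aut Auu.
have other_out : exists e : gE (fmgraph A), gs e = u /\ split_edge_part t e = part1.
  exists (fm_edge (fm_edge0 Auu)).
  by rewrite /split_edge_part /= eq_sym (negbTE t_neq_u).
apply: move_equiv_trans (move_equiv_split_edge t_neq_u Aut other_out) _.
pose t' : @Vsplit (fmgraph A) u 2 := inl (exist _ t t_neq_u).
have A1_out y : out_split_mx A u t (inr part0) y = Some (y == t' : nat) by case: y.
apply: (move_equiv_remove_vertex (t := t') _ A1_out (merge_copy_bij A u)) => // a b.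
rewrite /reduce_mx /out_split_mx /add_col_mx; merge_copy_cases a b; eq_cases.
Qed.

(* Split the edge [i' -> i] off [i]; the split-off copy is then collapsed into [i']. *)
Lemma move_equiv_add_row (V : finType) (A : V -> V -> ninf) (i i' : V) (d : V -> nat) :
  i' != i -> A i' i <> Some 0 -> (forall y, A i y = Some (d y)) -> 0 < d i ->
  move_equiv (fmgraph A) (fmgraph (add_row_mx A i i')).
Proof.
move=> i'_neq_i Ai'i Ai di.
have i_regular : regular (G := fmgraph A) i by apply: (regular_fmgraph Ai); exists i.
have other_in : exists e : gE (fmgraph A), gr e = i /\ split_source_part i' false e = part1.
  have lt0 : ninf_lt 0 (A i i) by rewrite Ai.
  by exists (fm_edge lt0); rewrite /split_source_part /= eq_sym (negbTE i'_neq_i).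
apply: move_equiv_trans (move_equiv_split_source i'_neq_i Ai'i i_regular other_in) _.
set A1 := in_split_mx A i i' false.
pose i'' : @Vsplit (fmgraph A) i 2 := inl (exist _ i' i'_neq_i).
pose d1 (x : @Vsplit (fmgraph A) i 2) : nat :=
  match x with inl b => d (sval b) | inr j => if j == part0 then 0 else d i end.
have A1_out y : A1 (inr part0) y = Some (d1 y).
  by case: y => [b|j]; rewrite /A1 /in_split_mx ?Ai //=; case: ifP; rewrite ?Ai.
have A1_in x : A1 x (inr part0) = Some (x == i'' : nat).
  case: x => [a|j] //; rewrite /A1 /in_split_mx /=.
  case: (sval a =P i') => [a_i' | /eqP a_i']; last first.
    have -> // : (inl a == i'') = false.
    by apply/negbTE; apply: contra a_i' => /eqP [->].
  by have -> : inl a == i'' by apply/eqP; congr inl; apply: val_inj.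
have sum_gt0 : 0 < \sum_y d1 y by rewrite (bigD1 (inr part1)) //= ltn_addr.
apply: (move_equiv_collapse _ A1_in A1_out sum_gt0 (merge_copy_bij A i)) => // a b.
rewrite /collapse_mx /A1 /in_split_mx /add_row_mx; merge_copy_cases a b; eq_cases.
Qed.

Lemma fmgraph_ext (V : finType) (A A' : V -> V -> ninf) : A =2 A' -> fmgraph A = fmgraph A'.
Proof.
by move=> AA'; congr fmgraph; apply: functional_extensionality => x;
  apply: functional_extensionality.
Qed.

Section JMatrix.
Variables (n m : nat).
Implicit Types (M : 'I_n -> 'I_n -> nat) (u t i x k z : 'I_n).

Definition jmx M (x y : 'I_n) : ninf := if x < m then Some ((x == y) + M x y) else None.
Definition jmx_equiv M M' := move_equiv (fmgraph (jmx M)) (fmgraph (jmx M')).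

Definition add_col M (u t : 'I_n) (x y : 'I_n) : nat := M x y + (y == t) * M x u.
Definition add_row M (i i' : 'I_n) (x y : 'I_n) : nat := M x y + (x == i') * M i y.

Lemma jmx_add_col M u t : u != t -> (m <= u) || (0 < M u t) ->
  jmx (add_col M u t) =2 add_col_mx (jmx M) u t.
Proof.
move=> u_neq_t edge_ut x y; rewrite /jmx /add_col /add_col_mx.
case: (y =P t) => [->|_]; last by rewrite mul0n addn0; case: ifP.
case: (x =P u) => [->|_]; case: ifP => //= ltm; congr Some; rewrite ?eqxx; last lia.
by move: edge_ut; rewrite leqNgt ltm (negbTE u_neq_t) /=; lia.
Qed.

Lemma jmx_add_row M i (i' : 'I_n) : i' != i -> i < m -> i' < m -> 0 < M i' i ->
  jmx (add_row M i i') =2 add_row_mx (jmx M) i i'.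
Proof.
move=> i'_neq_i i_lt i'_lt Mi'i x y; rewrite /jmx /add_row /add_row_mx.
case: (x =P i') => [->|_]; last by rewrite mul0n addn0.
rewrite i'_lt i_lt; case: (y =P i) => [->|/eqP y_neq_i] /=; congr Some.
  by rewrite (negbTE i'_neq_i) eqxx; lia.
by rewrite [i == y]eq_sym (negbTE y_neq_i); lia.
Qed.

Lemma jmx_equiv_add_col_edge M u t :
  u != t -> (m <= u) || (0 < M u t) -> jmx_equiv M (add_col M u t).
Proof.
move=> u_neq_t edge_ut; rewrite /jmx_equiv (fmgraph_ext (jmx_add_col u_neq_t edge_ut)).
apply: move_equiv_add_col; first by rewrite eq_sym.
  rewrite /jmx; case: ifP => // ltm; move: edge_ut; rewrite leqNgt ltm (negbTE u_neq_t) /=.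
  by move=> Mut [Mut0]; lia.
by rewrite /jmx; case: ifP => // _; rewrite eqxx.
Qed.

Lemma jmx_equiv_add_row_edge M i (i' : 'I_n) :
  i' != i -> i < m -> i' < m -> 0 < M i' i -> jmx_equiv M (add_row M i i').
Proof.
move=> i'_neq_i i_lt i'_lt Mi'i.
rewrite /jmx_equiv (fmgraph_ext (jmx_add_row i'_neq_i i_lt i'_lt Mi'i)).
apply: (@move_equiv_add_row _ _ _ _ (fun y => (i == y) + M i y)) => //.
- by rewrite /jmx i'_lt (negbTE i'_neq_i) => -[Mi'i0]; lia.
- by move=> y; rewrite /jmx i_lt.
- by rewrite eqxx.
Qed.

Lemma add_col_conj M x k z : x != z -> k != z ->
  add_col (add_col M x k) k z = add_col (add_col (add_col M x z) k z) x k.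
Proof.
move=> xz kz; apply: functional_extensionality => a; apply: functional_extensionality => b.
by rewrite /add_col eqxx (negbTE xz) (negbTE kz); lia.
Qed.

Lemma add_row_conj M x k z : z != x -> k != x ->
  add_row (add_row M z k) k x = add_row (add_row (add_row M z x) k x) z k.
Proof.
move=> zx kx; apply: functional_extensionality => a; apply: functional_extensionality => b.
by rewrite /add_row eqxx (negbTE zx) (negbTE kx); lia.
Qed.
End JMatrix.

Section AlongPaths.
Variables (n m : nat) (B : 'I_n -> 'I_n -> nat).
Implicit Types (M : 'I_n -> 'I_n -> nat) (x k z : 'I_n).

Definition dominates M := forall x y, B x y <= M x y.

Lemma dominates_add_col M u t : dominates M -> dominates (add_col M u t).
Proof. by move=> BM x y; apply: leq_trans (BM x y) (leq_addr _ _). Qed.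

Lemma dominates_add_row M i i' : dominates M -> dominates (add_row M i i').
Proof. by move=> BM x y; apply: leq_trans (BM x y) (leq_addr _ _). Qed.

Lemma jmx_edge x k : x != k -> (exists e : gE (fmgraph (jmx m B)), gs e = x /\ gr e = k) ->
  forall M, dominates M -> (m <= x) || (0 < M x k).
Proof.
move=> xk [[[[a b] l] lt_l] [/= ax bk]] M BM; subst a b; move: lt_l; rewrite /= /jmx.
case: ifP => [am | /negbT]; last by rewrite -leqNgt => ->.
by rewrite (negbTE xk) /= => lt_l; apply/orP; right; apply: leq_trans (BM _ _); lia.
Qed.

(* Induction along the path, conjugating by its first edge with [add_col_conj]. *)
Lemma jmx_equiv_add_col_path x z : reach (G := fmgraph (jmx m B)) x z -> x != z ->
  forall M, dominates M -> jmx_equiv m M (add_col M x z).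
Proof.
move=> /(clos_rt_rt1n _ _ _ _); elim=> {x z} [x|x k z xk _ IHk]; first by rewrite eqxx.
move=> xz M BM; case: (x =P k) => [xk_eq | /eqP xk_neq]; first by subst; exact: IHk.
have edge_xk M' := jmx_edge xk_neq xk (M := M').
case: (k =P z) => [kz | /eqP kz]; first by subst; exact: jmx_equiv_add_col_edge (edge_xk _ BM).
have BMxz := dominates_add_col x z BM.
apply: move_equiv_trans (jmx_equiv_add_col_edge xk_neq (edge_xk _ BM)) _.
apply: move_equiv_trans (IHk kz _ (dominates_add_col _ _ BM)) _.
rewrite add_col_conj //.
apply: move_equiv_trans (move_equiv_sym (IHk kz _ BMxz)).
exact: move_equiv_sym (jmx_equiv_add_col_edge xk_neq (edge_xk _ (dominates_add_col k z BMxz))).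
Qed.

Definition top_edge (a b : 'I_n) : bool := [&& a < m, b < m & (a == b) || (0 < B a b)].

Lemma jmx_equiv_add_row_path x z : clos_refl_trans_1n _ top_edge x z -> x != z ->
  forall M, dominates M -> jmx_equiv m M (add_row M z x).
Proof.
elim=> {x z} [x|x k z xk _ IHk]; first by rewrite eqxx.
move=> xz M BM; case/and3P: xk => x_lt k_lt xk.
case: (x =P k) => [xk_eq | /eqP xk_neq]; first by subst; exact: IHk.
have Mxk M' : dominates M' -> 0 < M' x k.
  by move=> BM'; move: xk; rewrite (negbTE xk_neq) => /leq_trans; apply.
case: (k =P z) => [kz | /eqP kz]; first by subst; exact: jmx_equiv_add_row_edge (Mxk _ BM).
have BMzx := dominates_add_row z x BM.
apply: move_equiv_trans (IHk kz _ BM) _.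
apply: move_equiv_trans (jmx_equiv_add_row_edge xk_neq k_lt x_lt (Mxk _ _)) _.
  exact: dominates_add_row.
rewrite add_row_conj 1?eq_sym //.
exact: move_equiv_trans (move_equiv_sym (IHk kz _ (dominates_add_row k x BMzx)))
  (move_equiv_sym (jmx_equiv_add_row_edge xk_neq k_lt x_lt (Mxk _ BMzx))).
Qed.
End AlongPaths.

Lemma mgraph_J_add (n m : nat) (B : 'M[nat]_n) :
  mgraph (mxaddinf (J_nm n m) (mxinf B)) = fmgraph (jmx m (fun x y => B x y)).
Proof.
rewrite -[mgraph _]/(fmgraph (fun x y => mxaddinf (J_nm n m) (mxinf B) x y)).
by apply: fmgraph_ext => x y; rewrite /mxaddinf /mxinf /J_nm !mxE /jmx; case: ifP.
Qed.

Lemma reach_topleft (n m : nat) (hmn : m <= n) (B : 'M[nat]_n) (a b : 'I_m) :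
  reach (G := mgraph (topleft hmn (mxaddinf (J_nm n m) (mxinf B)))) a b ->
  clos_refl_trans_1n _ (top_edge m (fun x y => B x y)) (widen_ord hmn a) (widen_ord hmn b).
Proof.
move=> /(clos_rt_rt1n _ _ _ _); elim=> [x|x y z xy _ IHyz]; first exact: rt1n_refl.
apply: Relation_Operators.rt1n_trans IHyz.
case: xy => [[[[x' y'] k] lt_k] [/= <- <-]].
move: lt_k; rewrite /edge_ok /topleft /mxaddinf /mxinf /J_nm !mxE /= ltn_ord /top_edge /= => lt_k.
rewrite !ltn_ord /=; case: (x' =P y') => [->|/eqP x'y']; first by rewrite eqxx.
have wxy : (widen_ord hmn x' == widen_ord hmn y') = false by apply/negbTE.
by move: lt_k; rewrite wxy /=; lia.
Qed.

Theorem proposition7p3 (n m : nat) (hmn : (m <= n)%N) (B B' : 'M[nat]_n) :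
  (forall i j : 'I_n, (m <= i)%N -> B i j = 0%N) ->
  irreducible (mxaddinf (J_nm n m) (mxinf B)) ->
  irreducible (topleft hmn (mxaddinf (J_nm n m) (mxinf B))) ->
  ((exists j j' : 'I_n, j != j' /\
       B' = (\matrix_(x, y) (B x y + (y == j') * B x j)%N)%R) \/
   (exists i i' : 'I_n, i != i' /\ (exists y, B i y != 0%N) /\ (exists y, B i' y != 0%N) /\
       B' = (\matrix_(x, y) (B x y + (x == i') * B i y)%N)%R)) ->
  mx_move_equiv (mxaddinf (J_nm n m) (mxinf B)) (mxaddinf (J_nm n m) (mxinf B')).
Proof.
move=> B_low irr irr_tl B'E; rewrite /mx_move_equiv !mgraph_J_add.
have B_dom : dominates (fun x y => B x y) (fun x y => B x y) by [].
case: B'E => [[j [j' [jj' ->]]] | [i [i' [ii' [[y Biy] [[y' Bi'y'] ->]]]]]].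
  have -> : (fun x y => ((\matrix_(x, y) (B x y + (y == j') * B x j)%N)%R : 'M_n) x y) =
      add_col (fun x y => B x y) j j'.
    by do 2 (apply: functional_extensionality => ?); rewrite mxE.
  by apply: jmx_equiv_add_col_path B_dom; first by rewrite /irreducible mgraph_J_add in irr.
have row_lt (r : 'I_n) z : B r z != 0 -> r < m by apply: contraR; rewrite -leqNgt => /B_low->.
have := reach_topleft (irr_tl (Ordinal (row_lt _ _ Bi'y')) (Ordinal (row_lt _ _ Biy))).
have -> : widen_ord hmn (Ordinal (row_lt _ _ Bi'y')) = i' by apply: val_inj.
have -> : widen_ord hmn (Ordinal (row_lt _ _ Biy)) = i by apply: val_inj.
move=> path_i'i.
have -> : (fun x y => ((\matrix_(x, y) (B x y + (x == i') * B i y)%N)%R : 'M_n) x y) =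
    add_row (fun x y => B x y) i i'.
  by do 2 (apply: functional_extensionality => ?); rewrite mxE.
by apply: jmx_equiv_add_row_path path_i'i _ _ B_dom; rewrite eq_sym.
Qed.
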